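(* Let $\varphi(x)=\sum_{i\ge0}\gamma_ix^i\in\mathbb{K}[[x]]$ and let $r$ be an even integer. If $r<0$, assume $\gamma_i=0$ for each $i\le -r$. Stipulating $\gamma_i=0$ for $i<0$, the $\gamma_i$ satisfy $$\sum_{i=0}^{m-1}(-1)^i\binom{m-1}{i}\gamma_{m-r+i}=0$$ for each $m\ge1$ if and only if $\varphi\in\mathcal{F}_r$.
   Context: $\mathbb{K}\in\{\mathbb{Q},\mathbb{R},\mathbb{C}\}$. For $r\in\mathbb{Z}$, $\mathcal{F}_r$ denotes the space of $\varphi\in\mathbb{K}[[x]]$ with $\varphi(x/(x-1))=(1-x)^r\varphi(x)$. *)

From mathcomp Require Import all_boot all_order all_algebra.
Set Implicit Arguments. Unset Strict Implicit. Unset Printing Implicit Defensive.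
Import Order.TTheory GRing.Theory Num.Theory.
Local Open Scope ring_scope.

Definition fps (K : numFieldType) := nat -> K.

Section FPS.
Variable K : numFieldType.

Definition fps_const (c : K) : fps K := fun n => if n is 0 then c else 0.
Definition fps_X : fps K := fun n => if n == 1%N then 1 else 0.
Definition fps_add (f g : fps K) : fps K := fun n => f n + g n.
Definition fps_mul (f g : fps K) : fps K :=
  fun n => \sum_(i < n.+1) f i * g (n - i)%N.
Definition fps_pow (f : fps K) (k : nat) : fps K :=
  iter k (fps_mul f) (fps_const 1).

(* composition phi(s(x)), meaningful when s has zero constant term:
   the coefficient of x^n only involves phi_i s^i for i <= n *)
Definition fps_comp (phi s : fps K) : fps K :=
  fun n => \sum_(i < n.+1) phi i * fps_pow s i n.

Definition one_minus_X : fps K := fps_add (fps_const 1) (fun n => - fps_X n).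
Definition X_minus_one : fps K := fps_add fps_X (fps_const (-1)).

(* F_r : phi(x/(x-1)) = (1-x)^r phi(x).  Here s ranges over series with
   (x-1) s = x, i.e. s = x/(x-1) (unique).  For r < 0 the identity
   phi(s) = (1-x)^r phi is written in the equivalent multiplied-out form
   (1-x)^(-r) phi(s) = phi, since (1-x) is invertible. *)
Definition in_F (r : int) (phi : fps K) : Prop :=
  forall s : fps K, fps_mul X_minus_one s = fps_X ->
    if (0 <= r) then fps_comp phi s = fps_mul (fps_pow one_minus_X `|r|%N) phi
    else fps_mul (fps_pow one_minus_X `|r|%N) (fps_comp phi s) = phi.

Definition coefz (phi : fps K) (z : int) : K :=
  match z with Posz n => phi n | Negz _ => 0 end.

End FPS.

From mathcomp Require Import all_boot all_order all_algebra.
From mathcomp Require Import ring zify.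
From Stdlib Require Import FunctionalExtensionality.
Set Implicit Arguments. Unset Strict Implicit. Unset Printing Implicit Defensive.
Import Order.TTheory GRing.Theory Num.Theory.
Local Open Scope ring_scope.

(* Let S = x/(x-1), an involution of xK[[x]] with (1-x) o S = 1/(1-x).  For
   r = 2k, phi(S) = (1-x)^r phi says exactly that psi = (1-x)^k phi is
   S-invariant; for r = -2k the same holds with psi = (1-x)^-k phi.  Now
   multiplying by (1-x)^p, composing with S flips the sign of the coefficient
   of x^(2p+1), so S-invariant series satisfy [x^(2p+1)] (1-x)^p psi = 0 for all
   p.  Conversely, D = psi(S) - psi is then anti-invariant with the same
   vanishing odd coefficients, and its lowest coefficient must vanish: at odd
   index it is one of these coefficients, at even index it equals its own
   opposite because S = -x + O(x^2).  Finally [x^(2p+1)] (1-x)^p psi is, up to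
   sign, the left-hand side of the m-th relation with m = p + 1 + r/2.  All of
   this is done on truncations modulo x^N. *)

Section CongruenceModXn.
Variable R : comNzRingType.
Implicit Types p q a b c D G P S : {poly R}.

Definition eqmodX (N : nat) p q := exists h : {poly R}, p - q = h * 'X^N.

Lemma eqmodX_refl N p : eqmodX N p p.
Proof. by exists 0; rewrite subrr mul0r. Qed.

Lemma eqmodX_sym N p q : eqmodX N p q -> eqmodX N q p.
Proof. by case=> h e; exists (- h); rewrite mulNr -e opprB. Qed.

Lemma eqmodX_trans N p q a : eqmodX N p q -> eqmodX N q a -> eqmodX N p a.
Proof.
by case=> h e [h' e']; exists (h + h'); rewrite mulrDl -e -e' addrA subrK.
Qed.

Lemma eqmodX_transl N p p' q : eqmodX N p p' -> eqmodX N p q <-> eqmodX N p' q.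
Proof.
by move=> E; split=> E'; [apply: eqmodX_trans (eqmodX_sym E) E' | apply: eqmodX_trans E E'].
Qed.

Lemma eqmodX_transr N p q q' : eqmodX N q q' -> eqmodX N p q <-> eqmodX N p q'.
Proof.
by move=> E; split=> E'; [apply: eqmodX_trans E' E | apply: eqmodX_trans E' (eqmodX_sym E)].
Qed.

Lemma eqmodX_add N p q a b : eqmodX N p q -> eqmodX N a b -> eqmodX N (p + a) (q + b).
Proof.
by case=> h e [h' e']; exists (h + h'); rewrite mulrDl -e -e' opprD addrACA.
Qed.

Lemma eqmodX_opp N p q : eqmodX N p q -> eqmodX N (- p) (- q).
Proof. by case=> h e; exists (- h); rewrite mulNr -e opprB addrC opprK. Qed.

Lemma eqmodX_mull N a p q : eqmodX N p q -> eqmodX N (a * p) (a * q).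
Proof. by case=> h e; exists (a * h); rewrite -mulrA -e mulrBr. Qed.

Lemma eqmodX_mulr N a p q : eqmodX N p q -> eqmodX N (p * a) (q * a).
Proof. by rewrite ![_ * a]mulrC; apply: eqmodX_mull. Qed.

Lemma eqmodX_mul N p q a b : eqmodX N p q -> eqmodX N a b -> eqmodX N (p * a) (q * b).
Proof. by move=> /(eqmodX_mulr a) E /(eqmodX_mull q); apply: eqmodX_trans. Qed.

Lemma eqmodX_exp N p q k : eqmodX N p q -> eqmodX N (p ^+ k) (q ^+ k).
Proof.
move=> E; elim: k => [|k IH]; first exact: eqmodX_refl.
by rewrite !exprS; apply: eqmodX_mul.
Qed.

Lemma eqmodX_mul1l N c p : eqmodX N c 1 -> eqmodX N (c * p) p.
Proof. by move/(eqmodX_mulr p); rewrite mul1r. Qed.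

Lemma eqmodX_mul_unitl N a b p q :
  eqmodX N (b * a) 1 -> eqmodX N (a * p) (a * q) <-> eqmodX N p q.
Proof.
move=> ba1; split=> [/(eqmodX_mull b)|]; last exact: eqmodX_mull.
rewrite !mulrA (eqmodX_transl _ (eqmodX_mul1l p ba1)).
by move/eqmodX_trans; apply; apply: eqmodX_mul1l.
Qed.

Lemma drop_poly_mulXn n p :
  (forall i, (i < n)%N -> p`_i = 0) -> p = drop_poly n p * 'X^n.
Proof.
move=> p_low; rewrite -{1}(poly_take_drop n p); suff -> : take_poly n p = 0.
  by rewrite add0r.
by apply/polyP => i; rewrite coef_take_poly coef0; case: ifP => // /p_low.
Qed.

Lemma eqmodXP N p q : eqmodX N p q <-> (forall n, (n < N)%N -> p`_n = q`_n).
Proof.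
split=> [[h e] n ltnN|pq]; first by apply/eqP; rewrite -subr_eq0 -coefB e coefMXn ltnN.
exists (drop_poly N (p - q)); apply: drop_poly_mulXn => i /pq.
by rewrite coefB => ->; rewrite subrr.
Qed.

Lemma eqmodX_compr N G a b : eqmodX N a b -> eqmodX N (G \Po a) (G \Po b).
Proof.
move=> E; elim/poly_ind: G => [|G c IH]; first by rewrite !comp_poly0; apply: eqmodX_refl.
rewrite !comp_polyD !comp_polyM !comp_polyX !comp_polyC.
by apply: eqmodX_add; [apply: eqmodX_mul | apply: eqmodX_refl].
Qed.

Lemma coef_expr_lt S i n : S`_0 = 0 -> (n < i)%N -> (S ^+ i)`_n = 0.
Proof.
move=> S0 ltni; have eS : S = drop_poly 1 S * 'X^1 by apply: drop_poly_mulXn; case.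
by rewrite eS exprMn -exprM mul1n coefMXn ltni.
Qed.

Lemma coefM_vanish_below n P D :
  (forall i, (i < n)%N -> D`_i = 0) -> (P * D)`_n = P`_0 * D`_n.
Proof. by move=> /drop_poly_mulXn ->; rewrite mulrA !coefMXn ltnn subnn coef0M. Qed.

Lemma coef_comp_vanish_below n S D : S`_0 = 0 ->
  (forall i, (i < n)%N -> D`_i = 0) -> (D \Po S)`_n = S`_1 ^+ n * D`_n.
Proof.
move=> S0 /drop_poly_mulXn ->; set E := drop_poly n D.
have eS : S = drop_poly 1 S * 'X^1 by apply: drop_poly_mulXn; case.
rewrite comp_polyM rmorphXn /= comp_polyX {2}eS exprMn mulrA coefMXn ltnn subnn.
rewrite coefMXn ltnn subnn -!horner_coef0 hornerM horner_exp horner_comp.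
by rewrite !horner_coef0 S0 coef_drop_poly mulrC horner_coef0.
Qed.

End CongruenceModXn.

Arguments eqmodXP {R N p q}.

Lemma signr_odd_subn (R : pzRingType) (i j : nat) :
  (i <= j)%N -> odd j -> (-1) ^+ i = - (-1) ^+ (j - i) :> R.
Proof.
move=> leij oddj; rewrite -signr_odd -[in RHS]signr_odd oddB // oddj.
by case: (odd i); rewrite /= ?opprK.
Qed.

Section MoebiusTruncation.
Variable R : comNzRingType.

Definition one_subX : {poly R} := 1 - 'X.
Definition geomX (N : nat) : {poly R} := \poly_(i < N) 1.
(* x/(x-1) = -(x + x^2 + ...), truncated below degree N *)
Definition moebX (N : nat) : {poly R} := 1 - geomX N.

Lemma coef_one_subX_exp p j : (one_subX ^+ p)`_j = (-1) ^+ j * ('C(p, j))%:R.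
Proof.
elim: p j => [|p IH] j.
  by rewrite expr0 coef1; case: j => [|j]; rewrite ?mul1r // bin0n mulr0.
rewrite exprS mulrBl mul1r coefB coefXM IH.
case: j => [|j] /=; first by rewrite subr0 !bin0.
by rewrite IH binS natrD mulrDr exprS; ring.
Qed.

Variable N : nat.

Lemma coef_geomX n : (geomX N)`_n = (n < N)%:R.
Proof. by rewrite coef_poly; case: ifP. Qed.

Lemma coef_moebX n : (n < N)%N -> (moebX N)`_n = if n is 0 then 0 else -1.
Proof. by rewrite coefB coef1 coef_geomX => ->; case: n => [|n]; rewrite ?subrr ?sub0r. Qed.

Lemma one_subX_mul_geomX : one_subX * geomX N = 1 - 'X^N.
Proof.
rewrite -(expr1n _ N) subrXX; congr (_ * _).
by rewrite /geomX poly_def; apply: eq_bigr => i _; rewrite expr1n mul1r scale1r.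
Qed.

Lemma X_sub1_mul_moebX : ('X - 1) * moebX N = 'X - 'X^N.
Proof.
rewrite /moebX (_ : ('X - 1) * (1 - geomX N) = 'X - 1 + one_subX * geomX N).
  by rewrite one_subX_mul_geomX addrA subrK.
by rewrite /one_subX; ring.
Qed.

Lemma eqmodX_one_subX_geomX : eqmodX N (one_subX * geomX N) 1.
Proof. by exists (-1); rewrite one_subX_mul_geomX addrAC subrr add0r mulN1r. Qed.

Lemma eqmodX_one_subX_geomX_exp k : eqmodX N (one_subX ^+ k * geomX N ^+ k) 1.
Proof. by rewrite -exprMn -(expr1n _ k); apply/eqmodX_exp/eqmodX_one_subX_geomX. Qed.

Lemma eqmodX_one_subX_geomX_cancel a k :
  eqmodX N (one_subX ^+ (a + k) * geomX N ^+ k) (one_subX ^+ a).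
Proof.
rewrite exprD -mulrA -{2}(mulr1 (one_subX ^+ a)).
exact/eqmodX_mull/eqmodX_one_subX_geomX_exp.
Qed.

Lemma eqmodX_geomX_one_subX_cancel a k :
  eqmodX N (one_subX ^+ k * geomX N ^+ (a + k)) (geomX N ^+ a).
Proof.
rewrite exprD mulrCA -{2}(mulr1 (geomX N ^+ a)).
exact/eqmodX_mull/eqmodX_one_subX_geomX_exp.
Qed.

Lemma coef_geomX_exp n j : (j < N)%N -> (geomX N ^+ n)`_j = ('C((n + j).-1, j))%:R.
Proof.
elim: n j => [|n IHn] j ltjN.
  by rewrite expr0 coef1 add0n; case: j {ltjN} => [|j] //=; rewrite bin_small.
have E := eqmodX_geomX_one_subX_cancel n 1; rewrite expr1 addn1 in E.
have step i : (i < N)%N -> (geomX N ^+ n.+1)`_i =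
    (geomX N ^+ n)`_i + (if i is i'.+1 then (geomX N ^+ n.+1)`_i' else 0).
  move=> ltiN; rewrite -(eqmodXP.1 E i ltiN) /one_subX mulrBl mul1r coefB coefXM.
  by case: (i) => [|i'] /=; rewrite subrK.
elim: j ltjN => [|j IHj] ltjN; rewrite step // IHn //; first by rewrite addr0 !bin0.
by rewrite IHj ?(ltnW ltjN) // -natrD addnS addSn /= -binS -addnS.
Qed.

Lemma moebX_eqmodX : eqmodX N (moebX N) (- ('X * geomX N)).
Proof.
exists 1; rewrite mul1r opprK /moebX.
rewrite (_ : 1 - geomX N + 'X * geomX N = 1 - one_subX * geomX N); last first.
  by rewrite /one_subX; ring.
by rewrite one_subX_mul_geomX opprB addrC subrK.
Qed.

Lemma eqmodX_moebX_exp n :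
  eqmodX N (moebX N ^+ n) ((-1) ^+ n *: ('X^n * geomX N ^+ n)).
Proof.
rewrite -mul_polyC rmorphXn /= rmorphN1 -exprMn -exprNn.
exact/eqmodX_exp/moebX_eqmodX.
Qed.

Lemma one_subX_comp_moebX : one_subX \Po moebX N = geomX N.
Proof. by rewrite comp_polyB comp_polyX rmorph1 /moebX opprB addrC subrK. Qed.

Lemma comp_moebX_one_subX_twist k G :
  eqmodX N (G \Po moebX N) (one_subX ^+ k.*2 * G) <->
  eqmodX N ((one_subX ^+ k * G) \Po moebX N) (one_subX ^+ k * G).
Proof.
have UV := eqmodX_one_subX_geomX_exp k.
have VU : eqmodX N (geomX N ^+ k * one_subX ^+ k) 1 by rewrite mulrC.
rewrite comp_polyM rmorphXn /= one_subX_comp_moebX -addnn exprD -mulrA.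
apply: iff_sym; apply: iff_trans (iff_sym (eqmodX_mul_unitl _ _ VU)) _.
apply: iff_sym; apply: eqmodX_transl.
by rewrite mulrA; apply/eqmodX_sym/eqmodX_mul1l.
Qed.

Hypothesis N_gt0 : (0 < N)%N.

Lemma coef0_moebX : (moebX N)`_0 = 0.
Proof. by rewrite coef_moebX. Qed.

Lemma geomX_comp_moebX : eqmodX N (geomX N \Po moebX N) one_subX.
Proof.
have SN0 : eqmodX N (moebX N ^+ N) 0.
  apply: eqmodX_trans (eqmodX_moebX_exp N) _.
  by exists ((-1) ^+ N *: geomX N ^+ N); rewrite subr0 -scalerAl mulrC.
have VVS1 : eqmodX N (geomX N * (geomX N \Po moebX N)) 1.
  rewrite -{1}one_subX_comp_moebX -comp_polyM one_subX_mul_geomX comp_polyB.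
  rewrite rmorph1 rmorphXn /= comp_polyX -[X in eqmodX _ _ X]subr0.
  exact: eqmodX_add (eqmodX_refl _ _) (eqmodX_opp SN0).
apply/(eqmodX_mul_unitl _ _ eqmodX_one_subX_geomX)/(eqmodX_trans VVS1).
by rewrite mulrC; apply/eqmodX_sym/eqmodX_one_subX_geomX.
Qed.

Lemma moebX_comp_moebX : eqmodX N (moebX N \Po moebX N) 'X.
Proof.
rewrite {1}/moebX comp_polyB rmorph1 (_ : 'X = 1 - one_subX).
  exact: eqmodX_add (eqmodX_refl _ _) (eqmodX_opp geomX_comp_moebX).
by rewrite /one_subX opprB addrC subrK.
Qed.

Lemma comp_moebX_geomX_twist k G :
  eqmodX N (one_subX ^+ k.*2 * (G \Po moebX N)) G <->
  eqmodX N ((geomX N ^+ k * G) \Po moebX N) (geomX N ^+ k * G).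
Proof.
have UV := eqmodX_one_subX_geomX_exp k.
have VU : eqmodX N (geomX N ^+ k * one_subX ^+ k) 1 by rewrite mulrC.
have VS := eqmodX_mulr (G \Po moebX N) (eqmodX_exp k geomX_comp_moebX).
rewrite comp_polyM rmorphXn /=; apply: iff_sym.
apply: iff_trans (eqmodX_transl _ VS) _.
apply: iff_trans (iff_sym (eqmodX_mul_unitl _ _ VU)) _.
rewrite mulrA -exprD addnn; apply: eqmodX_transr.
by rewrite mulrA; apply: eqmodX_mul1l.
Qed.

Lemma coef1_moebX_exp_even n : (n < N)%N -> ~~ odd n -> (moebX N)`_1 ^+ n = 1.
Proof.
case: n => [|n] ltnN evenn; first exact: expr0.
by rewrite coef_moebX ?(leq_ltn_trans _ ltnN) // -signr_odd (negbTE evenn).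
Qed.

Lemma coef_one_subX_moebX_exp p i : (p.*2.+1 < N)%N ->
  (one_subX ^+ p * moebX N ^+ i)`_p.*2.+1 = - (one_subX ^+ p * 'X^i)`_p.*2.+1.
Proof.
set j := p.*2.+1 => ltjN.
have oddj : odd j by rewrite /= odd_double.
have /eqmodXP E := eqmodX_mull (one_subX ^+ p) (eqmodX_moebX_exp i).
rewrite {}E // -scalerAr coefZ mulrCA coefXnM [_ * 'X^i]mulrC coefXnM.
case: ltnP => [|leij]; first by rewrite mulr0 oppr0.
have ltN : (j - i < N)%N := leq_ltn_trans (leq_subr i j) ltjN.
case: (leqP i p) => [leip | ltpi].
  have /eqmodXP E := eqmodX_one_subX_geomX_cancel (p - i) i.
  rewrite subnK // in E.
  by rewrite E // !coef_one_subX_exp !bin_small ?mulr0 ?oppr0 // /j -addnn; lia.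
have /eqmodXP E := eqmodX_geomX_one_subX_cancel (i - p) p.
rewrite subnK ?(ltnW ltpi) // in E.
(* (1-x)^-(i-p) and (1-x)^p both have coefficient +-'C(p, j - i) at x^(j-i) *)
rewrite E // coef_geomX_exp // coef_one_subX_exp (signr_odd_subn _ leij oddj) mulNr.
by have -> : (i - p + (j - i)).-1 = p by rewrite /j -addnn; lia.
Qed.

Lemma coef_comp_moebX_odd G p : (p.*2.+1 < N)%N ->
  (one_subX ^+ p * (G \Po moebX N))`_p.*2.+1 = - (one_subX ^+ p * G)`_p.*2.+1.
Proof.
move=> ltjN; rewrite comp_polyE -[in RHS](coefK G) poly_def.
rewrite !mulr_sumr !coef_sum -sumrN; apply: eq_bigr => i _.
by rewrite -!scalerAr !coefZ coef_one_subX_moebX_exp // mulrN.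
Qed.

End MoebiusTruncation.

Arguments one_subX {R}.
Arguments geomX {R} N.
Arguments moebX {R} N.

Section MoebiusInvariance.
Variables (K : numFieldType) (N : nat).
Hypothesis N_gt0 : (0 < N)%N.

Definition odd_coefs_vanish (G : {poly K}) :=
  forall p, (p.*2.+1 < N)%N -> (one_subX ^+ p * G)`_p.*2.+1 = 0.

Lemma eqmodX_moebX_anti D :
  eqmodX N (D \Po moebX N) (- D) -> odd_coefs_vanish D -> eqmodX N D 0.
Proof.
move=> D_anti D_odd; apply/eqmodXP => n; rewrite coef0.
elim/ltn_ind: n => n IH ltnN.
have low i : (i < n)%N -> D`_i = 0 by move=> ltin; apply: IH (ltn_trans ltin ltnN).
have [oddn | evenn] := boolP (odd n).
  have def_n : n = (n./2).*2.+1 by rewrite -[n in LHS]odd_double_half oddn.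
  have := D_odd n./2; rewrite -def_n => /(_ ltnN).
  by rewrite (coefM_vanish_below _ low) coef_one_subX_exp expr0 bin0 !mul1r.
have := eqmodXP.1 D_anti n ltnN.
rewrite (coef_comp_vanish_below (coef0_moebX K N_gt0) low).
by rewrite coef1_moebX_exp_even // mul1r coefN => /eqP; rewrite eq_sym eqNr => /eqP.
Qed.

Lemma comp_moebX_fixedP G : eqmodX N (G \Po moebX N) G <-> odd_coefs_vanish G.
Proof.
split=> [fixG p ltjN | oddG].
  have := eqmodXP.1 (eqmodX_mull (one_subX ^+ p) fixG) _ ltjN.
  by rewrite coef_comp_moebX_odd // => /eqP; rewrite eqNr => /eqP.
set D := G \Po moebX N - G.
have D_anti : eqmodX N (D \Po moebX N) (- D).
  rewrite /D comp_polyB -comp_polyA opprB; apply: eqmodX_add (eqmodX_refl _ _).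
  by rewrite -{2}(comp_polyXr G); apply/eqmodX_compr/moebX_comp_moebX.
have D_odd : odd_coefs_vanish D.
  by move=> p ltjN; rewrite mulrBr coefB coef_comp_moebX_odd // oddG // oppr0 addr0.
have := eqmodX_add (eqmodX_moebX_anti D_anti D_odd) (eqmodX_refl _ G).
by rewrite subrK add0r.
Qed.

End MoebiusInvariance.

Lemma sumr_ord_widen (V : nmodType) (F : nat -> V) a b :
  (a <= b)%N -> (forall i, (a <= i)%N -> F i = 0) ->
  \sum_(i < a) F i = \sum_(i < b) F i.
Proof.
move=> leab F0; rewrite (big_ord_widen _ _ leab) big_mkcond; apply: eq_bigr => i _.
by case: ifP => // /negbT; rewrite -leqNgt => /F0 ->.
Qed.

Section PowerSeriesTruncation.
Variable K : numFieldType.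
Implicit Types (f g phi s : fps K) (P Q S : {poly K}).

Definition agree N f P := forall n, (n < N)%N -> f n = P`_n.

Definition fps_trunc N f : {poly K} := \poly_(i < N) f i.

Lemma agree_trunc N f : agree N f (fps_trunc N f).
Proof. by move=> n ltnN; rewrite coef_poly ltnN. Qed.

Lemma agree_X N : agree N (fps_X K) 'X.
Proof. by move=> n _; rewrite coefX /fps_X; case: (n == 1)%N. Qed.

Lemma agree_one_minus_X N : agree N (one_minus_X K) one_subX.
Proof.
move=> n _; rewrite /one_minus_X /fps_add /fps_const /fps_X coefB coef1 coefX.
by case: n => [|[|n]] /=; rewrite ?subr0 ?oppr0 ?addr0 ?add0r ?sub0r.
Qed.

Lemma agree_X_minus_one N : agree N (X_minus_one K) ('X - 1).
Proof.
move=> n _; rewrite /X_minus_one /fps_add /fps_const /fps_X coefB coef1 coefX.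
by case: n => [|[|n]] /=; rewrite ?subr0 ?addr0 ?add0r ?sub0r.
Qed.

Lemma agree_mul N f g P Q :
  agree N f P -> agree N g Q -> agree N (fps_mul f g) (P * Q).
Proof.
move=> fP gQ n ltnN; rewrite coefM; apply: eq_bigr => -[i /= ltin] _.
rewrite fP ?gQ ?(leq_trans ltin ltnN) //.
exact: leq_ltn_trans (leq_subr i n) ltnN.
Qed.

Lemma agree_pow N f P k : agree N f P -> agree N (fps_pow f k) (P ^+ k).
Proof.
move=> fP; elim: k => [|k IH]; last by rewrite exprS; apply: agree_mul.
by move=> [|n] _; rewrite expr0 coef1.
Qed.

Lemma agree_comp N phi s P S : agree N phi P -> agree N s S -> S`_0 = 0 ->
  agree N (fps_comp phi s) (P \Po S).
Proof.
move=> phiP sS S0 n ltnN; rewrite coef_comp_poly /fps_comp.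
transitivity (\sum_(i < n.+1) P`_i * (S ^+ i)`_n).
  by apply: eq_bigr => -[i /= ltin] _; rewrite phiP ?(agree_pow i sS) ?(leq_trans ltin).
pose F i := P`_i * (S ^+ i)`_n.
rewrite (@sumr_ord_widen _ F _ (n.+1 + size P) (leq_addr _ _)); last first.
  by move=> i ltni; rewrite /F coef_expr_lt ?mulr0.
apply/esym/sumr_ord_widen; first exact: leq_addl.
by move=> i leiP; rewrite /F nth_default ?mul0r.
Qed.

Lemma agree_moebX N s :
  fps_mul (X_minus_one K) s = fps_X K -> agree N s (moebX N).
Proof.
move=> Xs; have trunc_s : eqmodX N (('X - 1) * fps_trunc N s) 'X.
  apply/eqmodXP => n ltnN.
  by rewrite -(agree_mul (@agree_X_minus_one N) (@agree_trunc N s)) // Xs (agree_X ltnN).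
have moeb : eqmodX N (('X - 1) * moebX N) ('X : {poly K}).
  by exists (-1); rewrite X_sub1_mul_moebX addrAC subrr add0r mulN1r.
have unitU : eqmodX N (geomX N * (1 - 'X)) (1 : {poly K}).
  by rewrite mulrC; apply: eqmodX_one_subX_geomX.
have := eqmodX_opp (eqmodX_trans trunc_s (eqmodX_sym moeb)).
rewrite -!mulNr opprB => /(eqmodX_mul_unitl _ _ unitU) /eqmodXP E n ltnN.
by rewrite -E // (agree_trunc s ltnN).
Qed.

Definition fps_moeb : fps K := fun n => if n is 0 then 0 else -1.

Lemma agree_fps_moeb N : agree N fps_moeb (moebX N).
Proof. by move=> n ltnN; rewrite coef_moebX. Qed.

Lemma fps_moeb_spec : fps_mul (X_minus_one K) fps_moeb = fps_X K.
Proof.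
apply: functional_extensionality => n.
rewrite (agree_mul (@agree_X_minus_one n.+1) (@agree_fps_moeb n.+1)) //.
by rewrite X_sub1_mul_moebX coefB coefXn ltn_eqF // subr0 (@agree_X n.+1).
Qed.

Lemma fps_eq_agreeP f g (P Q : nat -> {poly K}) :
    (forall N, agree N f (P N)) -> (forall N, agree N g (Q N)) ->
  f = g <-> forall N, (0 < N)%N -> eqmodX N (P N) (Q N).
Proof.
move=> fP gQ; split=> [fg N _ | PQ].
  by apply/eqmodXP => n ltnN; rewrite -(fP N n ltnN) fg (gQ N n ltnN).
apply: functional_extensionality => n; rewrite (fP n.+1) // (gQ n.+1) //.
exact: eqmodXP.1 (PQ n.+1 (ltn0Sn n)) n (ltnSn n).
Qed.

Lemma agree_comp_moebX N phi s : fps_mul (X_minus_one K) s = fps_X K ->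
  agree N (fps_comp phi s) (fps_trunc N phi \Po moebX N).
Proof.
case: N => [//|N] Xs.
exact: agree_comp (@agree_trunc N.+1 phi) (@agree_moebX N.+1 s Xs) (coef0_moebX K (ltn0Sn N)).
Qed.

Lemma agree_one_minus_X_exp_mul N k phi :
  agree N (fps_mul (fps_pow (one_minus_X K) k) phi) (one_subX ^+ k * fps_trunc N phi).
Proof. exact: agree_mul (agree_pow k (@agree_one_minus_X N)) (@agree_trunc N phi). Qed.

Lemma in_F_natP k phi : in_F k%:Z phi <-> forall N, (0 < N)%N ->
  eqmodX N (fps_trunc N phi \Po moebX N) (one_subX ^+ k * fps_trunc N phi).
Proof.
have agree_lhs s Xs N := @agree_comp_moebX N phi s Xs.
have agree_rhs N := @agree_one_minus_X_exp_mul N k phi.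
rewrite /in_F /=; split=> [/(_ _ fps_moeb_spec) | inF s Xs].
  exact: (fps_eq_agreeP (agree_lhs _ fps_moeb_spec) agree_rhs).1.
exact: (fps_eq_agreeP (agree_lhs _ Xs) agree_rhs).2.
Qed.

Lemma in_F_NnatP k phi : (0 < k)%N -> in_F (- k%:Z) phi <-> forall N, (0 < N)%N ->
  eqmodX N (one_subX ^+ k * (fps_trunc N phi \Po moebX N)) (fps_trunc N phi).
Proof.
move=> k_gt0; have agree_lhs s Xs N :=
  agree_mul (agree_pow k (@agree_one_minus_X N)) (@agree_comp_moebX N phi s Xs).
have agree_rhs N := @agree_trunc N phi.
rewrite /in_F oppr_ge0 lez_nat leqn0 (negPf (lt0n_neq0 k_gt0)) abszN absz_nat.
split=> [/(_ _ fps_moeb_spec) | inF s Xs].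
  exact: (fps_eq_agreeP (agree_lhs _ fps_moeb_spec) agree_rhs).1.
exact: (fps_eq_agreeP (agree_lhs _ Xs) agree_rhs).2.
Qed.

End PowerSeriesTruncation.

Lemma coefz_lt0 (K : numFieldType) (phi : fps K) (z : int) : z < 0 -> coefz phi z = 0.
Proof. by case: z. Qed.

Section BinomialRelations.
Variables (K : numFieldType) (phi : fps K).

Definition binom_relations (r : int) := forall m : nat, (0 < m)%N ->
  \sum_(i < m) (-1) ^+ i * ('C(m.-1, i))%:R * coefz phi (m%:Z - r + i%:Z) = 0.

Lemma coef_one_subX_expM N P p n : agree N phi P -> (n < N)%N ->
  (one_subX ^+ p * P)`_n =
  \sum_(j < p.+1) (-1) ^+ j * ('C(p, j))%:R * coefz phi (n%:Z - j%:Z).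
Proof.
move=> phiP ltnN; pose F j := (-1) ^+ j * ('C(p, j))%:R * coefz phi (n%:Z - j%:Z).
rewrite coefM (_ : \sum_(j < n.+1) _ = \sum_(j < n.+1) F j); last first.
  apply: eq_bigr => -[j /= ltjn] _; rewrite coef_one_subX_exp /F subzn //= phiP //.
  exact: leq_ltn_trans (leq_subr j n) ltnN.
rewrite (@sumr_ord_widen _ F _ (n.+1 + p.+1) (leq_addr _ _)); last first.
  by move=> j ltnj; rewrite /F coefz_lt0 ?mulr0 // subr_lt0 ltz_nat.
apply/esym/sumr_ord_widen; first exact: leq_addl.
by move=> j ltpj; rewrite /F bin_small ?mulr0 ?mul0r.
Qed.

Lemma binom_relation_coef N P p n (r : int) : agree N phi P -> (n < N)%N ->
    n%:Z = (p.*2.+1)%:Z - r ->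
  \sum_(i < p.+1) (-1) ^+ i * ('C(p, i))%:R * coefz phi ((p.+1)%:Z - r + i%:Z) =
  (-1) ^+ p * (one_subX ^+ p * P)`_n.
Proof.
move=> phiP ltnN def_n; rewrite (coef_one_subX_expM _ phiP ltnN) mulr_sumr.
rewrite (reindex_inj rev_ord_inj); apply: eq_bigr => -[i /= ltip] _.
rewrite subSS bin_sub // !mulrA -exprD.
have -> : (p.+1)%:Z - r + (p - i)%N%:Z = n%:Z - i%:Z by rewrite def_n -subzn //; lia.
by rewrite -signr_odd oddB // -oddD signr_odd.
Qed.

Lemma binom_relations_double k : binom_relations (k.*2)%:Z <->
  forall N, (0 < N)%N -> odd_coefs_vanish N (one_subX ^+ k * fps_trunc N phi).
Proof.
split=> [rel N _ p ltjN | odd0 [//|m] _].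
  have := rel (p + k)%N.+1 isT.
  rewrite (binom_relation_coef (@agree_trunc _ N phi) ltjN); last by rewrite -!muln2; lia.
  by rewrite mulrA -exprD => /eqP; rewrite mulf_eq0 signr_eq0 => /eqP.
case: (ltnP m k) => [ltmk | lekm].
  rewrite big1 // => i _; rewrite coefz_lt0 ?mulr0 //.
  by have := ltn_ord i; rewrite -!muln2; lia.
have := odd0 _ (ltn0Sn (m - k)%N.*2.+1) (m - k)%N (ltnSn _).
rewrite mulrA -exprD subnK //.
rewrite (binom_relation_coef (@agree_trunc _ (m - k)%N.*2.+2 phi) (ltnSn _)).
  by move=> ->; rewrite mulr0.
by rewrite -!muln2; lia.
Qed.

Lemma binom_relations_Ndouble k : (forall i, (i <= k.*2)%N -> phi i = 0) ->
  binom_relations (- (k.*2)%:Z) <->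
  forall N, (0 < N)%N -> odd_coefs_vanish N (geomX N ^+ k * fps_trunc N phi).
Proof.
move=> phi_low.
have cancel N p : (k <= p)%N -> eqmodX N (one_subX ^+ p * (geomX N ^+ k * fps_trunc N phi))
    (one_subX ^+ (p - k) * fps_trunc N phi).
  move=> lekp; have := eqmodX_mulr (fps_trunc N phi) (@eqmodX_one_subX_geomX_cancel K N (p - k) k).
  by rewrite subnK // mulrA.
split=> [rel N _ p ltjN | odd0 [//|m] _].
  have [lekp | ltpk] := leqP k p.
    rewrite (eqmodXP.1 (cancel N p lekp) _ ltjN); have := rel (p - k)%N.+1 isT.
    rewrite (binom_relation_coef (@agree_trunc _ N phi) ltjN); last by rewrite -!muln2; lia.
    by move/eqP; rewrite mulf_eq0 signr_eq0 => /eqP.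
  have trunc_low i : (i <= p.*2.+1)%N -> (fps_trunc N phi)`_i = 0.
    move=> leij; rewrite -(agree_trunc phi (leq_ltn_trans leij ltjN)) phi_low //.
    by rewrite -!muln2 in ltpk leij *; lia.
  rewrite mulrA (coefM_vanish_below _ (fun i lti => trunc_low i (ltnW lti))).
  by rewrite trunc_low ?mulr0.
have := odd0 _ (ltn0Sn (m + k)%N.*2.+1) (m + k)%N (ltnSn _).
rewrite (eqmodXP.1 (cancel _ _ (leq_addl _ _)) _ (ltnSn _)) addnK.
rewrite (binom_relation_coef (@agree_trunc _ (m + k)%N.*2.+2 phi) (ltnSn _)).
  by move=> ->; rewrite mulr0.
by rewrite -!muln2; lia.
Qed.

Lemma binom_relations_in_F_double k :
  binom_relations (k.*2)%:Z <-> in_F (k.*2)%:Z phi.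
Proof.
apply: iff_trans (binom_relations_double k) (iff_sym (iff_trans (in_F_natP _ _) _)).
split=> H N N_gt0; have := H N N_gt0.
  by move/comp_moebX_one_subX_twist/(comp_moebX_fixedP N_gt0).
by move/(comp_moebX_fixedP N_gt0)/comp_moebX_one_subX_twist.
Qed.

Lemma binom_relations_in_F_Ndouble k : (0 < k)%N ->
    (forall i, (i <= k.*2)%N -> phi i = 0) ->
  binom_relations (- (k.*2)%:Z) <-> in_F (- (k.*2)%:Z) phi.
Proof.
move=> k_gt0 phi_low; apply: iff_trans (binom_relations_Ndouble phi_low) _.
apply: iff_sym; apply: iff_trans (in_F_NnatP _ _) _; first by rewrite double_gt0.
split=> H N N_gt0; have := H N N_gt0.
  by move/comp_moebX_geomX_twist/(comp_moebX_fixedP N_gt0).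
by move/(comp_moebX_fixedP N_gt0)/comp_moebX_geomX_twist.
Qed.

End BinomialRelations.

Lemma even_int_cases (r : int) : (2 %| r)%Z ->
  (exists k, r = (k.*2)%:Z) \/ (exists2 k, (0 < k)%N & r = - (k.*2)%:Z).
Proof.
move=> two_r; have /negbTE odd_r : ~~ odd `|r|%N by rewrite -dvdn2; exact: two_r.
have def_r : `|r|%N = (`|r|%N./2).*2 by rewrite -[LHS]odd_double_half odd_r.
case: (ltrP r 0) => [r_lt0 | r_ge0]; [right | left]; exists (`|r|%N./2).
- by rewrite -double_gt0 -def_r absz_gt0 ltr0_neq0.
- by rewrite -def_r abszE ltr0_norm // opprK.
- by rewrite -def_r abszE ger0_norm.
Qed.

Theorem corollary4p2 (K : numFieldType) (phi : fps K) (r : int) :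
  (2 %| r)%Z ->
  (r < 0 -> forall i : nat, (i%:Z <= - r) -> phi i = 0) ->
  ((forall m : nat, (0 < m)%N ->
      \sum_(i < m) (-1) ^+ i * ('C(m.-1, i))%:R * coefz phi (m%:Z - r + i%:Z) = 0)
   <-> in_F r phi).
Proof.
move=> /even_int_cases[[k ->] | [k k_gt0 ->]] phi_low.
  exact: binom_relations_in_F_double.
apply: binom_relations_in_F_Ndouble => // i le_i_2k.
by apply: phi_low; rewrite ?oppr_lt0 ?opprK ?ltz_nat ?lez_nat ?double_gt0.
Qed.
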